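(* Let $\mathfrak{H}$ be a Euclidean space and let $(\mathcal{X},\mathsf{S},\gamma,(\Lambda_{a})_{a\in\mathcal{A}})$ be a spectral decomposition system for $\mathfrak{H}$ such that the set $\{\Lambda_a\}_{a\in\mathcal{A}}$ is closed in $\mathscr{L}(\mathcal{X},\mathfrak{H})$. Let $\varphi\colon\mathcal{X}\to[-\infty,+\infty]$ be $\mathsf{S}$-invariant and let $X\in\mathfrak{H}$. Then: (i) $\partial_{\mathsf{F}}(\varphi\circ\gamma)(X)=\{\Lambda_a y: y\in\partial_{\mathsf{F}}\varphi(\gamma(X))\ \text{and}\ a\in\mathcal{A}_X\}$; (ii) $\partial_{\mathsf{L}}(\varphi\circ\gamma)(X)=\{\Lambda_a y: y\in\partial_{\mathsf{L}}\varphi(\gamma(X))\ \text{and}\ a\in\mathcal{A}_X\}$.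
   Context: A Euclidean space is a finite-dimensional real Hilbert space; $\mathscr{L}(\mathcal{X},\mathfrak{H})$ carries the operator-norm topology. A spectral decomposition system for a Euclidean space $\mathfrak{H}$ is a tuple $(\mathcal{X},\mathsf{S},\gamma,(\Lambda_a)_{a\in\mathcal{A}})$ where $\mathcal{X}$ is a Euclidean space, $\mathsf{S}$ is a group acting on $\mathcal{X}$ such that each map $x\mapsto \mathsf{s}\cdot x$ is a linear isometry, $\gamma\colon\mathfrak{H}\to\mathcal{X}$ is a mapping, and each $\Lambda_a\colon\mathcal{X}\to\mathfrak{H}$ is a linear isometry, such that: [A] there exists a mapping $\tau\colon\mathcal{X}\to\mathcal{X}$ with $\tau(\mathsf{s}\cdot x)=\tau(x)$ for all $\mathsf{s},x$, $\tau(x)\in\mathsf{S}\cdot x$ for all $x$, and $\gamma\circ\Lambda_a=\tau$ for all $a\in\mathcal{A}$; [B] for every $X\in\mathfrak{H}$ there exists $a\in\mathcal{A}$ with $X=\Lambda_a\gamma(X)$; [C] $\langle X,Y\rangle\le\langle\gamma(X),\gamma(Y)\rangle$ for all $X,Y\in\mathfrak{H}$. $\mathcal{A}_X=\{a\in\mathcal{A}:X=\Lambda_a\gamma(X)\}$. A function $\varphi$ on $\mathcal{X}$ is $\mathsf{S}$-invariant if $\varphi(\mathsf{s}\cdot x)=\varphi(x)$ for all $\mathsf{s}\in\mathsf{S}$, $x\in\mathcal{X}$. For $f\colon\mathcal{H}\to[-\infty,+\infty]$ on a Euclidean space $\mathcal{H}$: the Fréchet subdifferential is $\partial_{\mathsf{F}}f(x)=\{y:\liminf_{z\to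 x,z\ne x}(f(z)-f(x)-\langle z-x,y\rangle)/\|z-x\|\ge0\}$ if $f(x)\in\mathbb{R}$ and $\varnothing$ otherwise; the limiting subdifferential $\partial_{\mathsf{L}}f(x)$, for $f(x)\in\mathbb{R}$, is the set of $y$ for which there exist $x_n\to x$ with $f(x_n)\to f(x)$ and $y_n\to y$ with $y_n\in\partial_{\mathsf{F}}f(x_n)$, and $\partial_{\mathsf{L}}f(x)=\varnothing$ if $f(x)\in\{\pm\infty\}$. *)

From HB Require Import structures.
From mathcomp Require Import all_boot all_order all_algebra.
From mathcomp Require Import all_classical all_reals all_analysis.
Set Implicit Arguments. Unset Strict Implicit. Unset Printing Implicit Defensive.
Import Order.TTheory GRing.Theory Num.Theory.
Import numFieldNormedType.Exports.
Local Open Scope classical_set_scope.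
Local Open Scope ring_scope.

(* A Euclidean space of dimension n is modelled by row vectors 'rV[R]_n with
   the standard inner product. *)
Definition dot {R : realType} {n : nat} (u v : 'rV[R]_n) : R :=
  \sum_(i < n) u ord0 i * v ord0 i.

Definition enorm {R : realType} {n : nat} (u : 'rV[R]_n) : R :=
  Num.sqrt (dot u u).

Definition mx_isometry {R : realType} {m n : nat} (L : 'M[R]_(m, n)) : Prop :=
  forall x : 'rV[R]_m, enorm (x *m L) = enorm x.

Definition is_isometric_group_action {R : realType} {m : nat} {G : Type}
  (mul : G -> G -> G) (one : G) (inv : G -> G) (act : G -> 'M[R]_m) : Prop :=
  [/\ (forall s t u, mul s (mul t u) = mul (mul s t) u),
      (forall s, mul one s = s),
      (forall s, mul (inv s) s = one),
      (act one = 1%:M /\ forall s t, act (mul s t) = act t *m act s)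
    & (forall s, mx_isometry (act s))].

Definition orbit_of {R : realType} {m : nat} {G : Type} (act : G -> 'M[R]_m)
  (x : 'rV[R]_m) : set 'rV[R]_m := [set x *m act s | s in [set: G]].

(* Spectral decomposition system (X = 'rV_m, S = (G, mul, one, inv, act),
   gamma, (Lam a)_{a in A}) for H = 'rV_n; Lam a acts by x |-> x *m Lam a. *)
Definition spectral_decomposition_system {R : realType} {m n : nat} {G A : Type}
  (mul : G -> G -> G) (one : G) (inv : G -> G) (act : G -> 'M[R]_m)
  (gam : 'rV[R]_n -> 'rV[R]_m) (Lam : A -> 'M[R]_(m, n)) : Prop :=
  [/\ is_isometric_group_action mul one inv act,
      (forall a, mx_isometry (Lam a)),
      (exists tau : 'rV[R]_m -> 'rV[R]_m,
         [/\ (forall s x, tau (x *m act s) = tau x),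
             (forall x, orbit_of act x (tau x))
           & (forall a x, gam (x *m Lam a) = tau x)]),
      (forall X : 'rV[R]_n, exists a, X = gam X *m Lam a)
    & (* [C] *)
      (forall X Y : 'rV[R]_n, dot X Y <= dot (gam X) (gam Y))].

Definition adapted {R : realType} {m n : nat} {A : Type}
  (gam : 'rV[R]_n -> 'rV[R]_m) (Lam : A -> 'M[R]_(m, n)) (X : 'rV[R]_n) (a : A) : Prop :=
  X = gam X *m Lam a.

Definition S_invariant {R : realType} {m : nat} {G : Type} (act : G -> 'M[R]_m)
  (phi : 'rV[R]_m -> \bar R) : Prop :=
  forall s x, phi (x *m act s) = phi x.

(* Frechet subdifferential: f x real and
   liminf_{z -> x, z <> x} (f z - f x - <z - x, y>) / ||z - x|| >= 0,
   written out with epsilon-delta. *)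
Definition frechet_subdiff {R : realType} {n : nat} (f : 'rV[R]_n -> \bar R)
  (x : 'rV[R]_n) : set 'rV[R]_n :=
  [set y | (exists r : R, f x = r%:E) /\
     forall e : R, 0 < e -> exists2 d : R, 0 < d &
       forall z : 'rV[R]_n, 0 < enorm (z - x) < d ->
         ((dot (z - x) y - e * enorm (z - x))%:E <= f z - f x)%E].

Definition limiting_subdiff {R : realType} {n : nat} (f : 'rV[R]_n -> \bar R)
  (x : 'rV[R]_n) : set 'rV[R]_n :=
  [set y | (exists r : R, f x = r%:E) /\
     exists (xs ys : nat -> 'rV[R]_n),
       [/\ xs @ \oo --> x,
           (fun k => f (xs k)) @ \oo --> f x,
           ys @ \oo --> y
         & forall k, frechet_subdiff f (xs k) (ys k)]].

(* If [a] is adapted to [X], a Frechet subgradient [y] of [phi] at [gam X]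
   lifts to [y Lam a]: moving [gam X] and [y] together along one orbit of [S]
   and using [C], the increment of [phi o gam] at a point [Z] near [X] is
   bounded below by that of [phi] at a point [u] with
   [|u - gam X| = O(|Z - X|)].
   Conversely, let [Y] be a Frechet subgradient of [phi o gam] at [X] and [b_k]
   adapted to [X + Y/(k+1)]. The closed set of isometries [Lam a] is compact,
   so [Lam b_k] has a subsequence converging to some [Lam a]; then [a] is
   adapted to [X], and the Frechet inequality forces [|Y Lam a^T| = |Y|], i.e.
   [Y = y Lam a] with [y = Y Lam a^T]. Limiting subgradients are handled by the
   same subsequence argument along their defining sequences. *)

From HB Require Import structures.
From mathcomp Require Import all_boot all_order all_algebra.
From mathcomp Require Import all_classical all_reals all_analysis.
From mathcomp Require Import ring lra.
Set Implicit Arguments. Unset Strict Implicit. Unset Printing Implicit Defensive.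
Import Order.TTheory GRing.Theory Num.Theory.
Import numFieldNormedType.Exports.
Local Open Scope classical_set_scope.
Local Open Scope ring_scope.

Section Euclidean.
Variables (R : realType) (n : nat).
Implicit Types (u v w : 'rV[R]_n) (a c : R).

Lemma dotC u v : dot u v = dot v u.
Proof. by apply: eq_bigr => i _; rewrite mulrC. Qed.

Lemma dotDl u w v : dot (u + w) v = dot u v + dot w v.
Proof.
by rewrite /dot -big_split; apply: eq_bigr => i _; rewrite mxE mulrDl.
Qed.

Lemma dotZl a u v : dot (a *: u) v = a * dot u v.
Proof. by rewrite /dot mulr_sumr; apply: eq_bigr => i _; rewrite mxE mulrA. Qed.

Lemma dotNl u v : dot (- u) v = - dot u v.
Proof. by rewrite -scaleN1r dotZl mulN1r. Qed.

Lemma dotBl u w v : dot (u - w) v = dot u v - dot w v.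
Proof. by rewrite dotDl dotNl. Qed.

Lemma dotDr u w v : dot v (u + w) = dot v u + dot v w.
Proof. by rewrite dotC dotDl !(dotC v). Qed.

Lemma dotBr u w v : dot v (u - w) = dot v u - dot v w.
Proof. by rewrite dotC dotBl !(dotC v). Qed.

Lemma dotZr a u v : dot v (a *: u) = a * dot v u.
Proof. by rewrite dotC dotZl dotC. Qed.

Lemma dot0l v : dot 0 v = 0.
Proof. by rewrite /dot big1 // => i _; rewrite mxE mul0r. Qed.

Lemma dotxx_ge0 u : 0 <= dot u u.
Proof. by apply: sumr_ge0 => i _; rewrite -expr2 sqr_ge0. Qed.

Lemma dotxx_eq0 u : dot u u = 0 -> u = 0.
Proof.
move=> /eqP; rewrite psumr_eq0 => [/allP u0|i _]; last first.
  by rewrite -expr2 sqr_ge0.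
apply/rowP => i; rewrite mxE; have := u0 i (mem_index_enum _).
by rewrite -expr2 sqrf_eq0 => /eqP.
Qed.

Lemma enorm_ge0 u : 0 <= enorm u.
Proof. exact: sqrtr_ge0. Qed.

Lemma enorm_sqr u : enorm u ^+ 2 = dot u u.
Proof. by rewrite /enorm sqr_sqrtr // dotxx_ge0. Qed.

Lemma enorm_eq0 u : enorm u = 0 -> u = 0.
Proof. by move=> u0; apply: dotxx_eq0; rewrite -enorm_sqr u0 expr0n. Qed.

Lemma enorm0 : enorm (0 : 'rV[R]_n) = 0.
Proof. by rewrite /enorm dot0l sqrtr0. Qed.

Lemma enorm_leP u c : 0 <= c -> (enorm u <= c) = (dot u u <= c ^+ 2).
Proof. by move=> c0; rewrite -enorm_sqr ler_pXn2r // ?nnegrE ?enorm_ge0. Qed.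

Lemma dot_le_enorm u v : dot u v <= enorm u * enorm v.
Proof.
have [u0|u0] := eqVneq (enorm u) 0.
  by rewrite (enorm_eq0 u0) dot0l enorm0 mul0r.
have [v0|v0] := eqVneq (enorm v) 0.
  by rewrite (enorm_eq0 v0) dotC dot0l enorm0 mulr0.
have up : 0 < enorm u by rewrite lt_def u0 enorm_ge0.
have vp : 0 < enorm v by rewrite lt_def v0 enorm_ge0.
set a := enorm u; set b := enorm v.
have := dotxx_ge0 (b *: u - a *: v).
rewrite !(dotBl, dotBr, dotZl, dotZr) -!enorm_sqr -/a -/b (dotC v u) => h.
have : 0 <= 2 * a * b * (a * b - dot u v) by lra.
by rewrite pmulr_rge0 ?subr_ge0 // !mulr_gt0.
Qed.

Lemma enormN u : enorm (- u) = enorm u.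
Proof. by rewrite /enorm dotNl dotC dotNl opprK. Qed.

Lemma normr_dot_le u v : `|dot u v| <= enorm u * enorm v.
Proof.
rewrite ler_norml dot_le_enorm andbT.
by have := dot_le_enorm (- u) v; rewrite dotNl enormN; lra.
Qed.

Lemma enorm_distC u v : enorm (u - v) = enorm (v - u).
Proof. by rewrite -enormN opprB. Qed.

Lemma enormZ a u : enorm (a *: u) = `|a| * enorm u.
Proof.
by rewrite /enorm dotZl dotZr mulrA -expr2 sqrtrM ?sqr_ge0 // sqrtr_sqr.
Qed.

Lemma enorm_sqrD u v :
  enorm (u + v) ^+ 2 = enorm u ^+ 2 + 2 * dot u v + enorm v ^+ 2.
Proof. rewrite !enorm_sqr !(dotDl, dotDr) (dotC v u); ring. Qed.

Lemma enorm_sqrB u v :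
  enorm (u - v) ^+ 2 = enorm u ^+ 2 - 2 * dot u v + enorm v ^+ 2.
Proof. rewrite !enorm_sqr !(dotBl, dotBr) (dotC v u); ring. Qed.

Lemma enormD u v : enorm (u + v) <= enorm u + enorm v.
Proof.
rewrite enorm_leP ?addr_ge0 ?enorm_ge0 // -enorm_sqr enorm_sqrD.
by have := dot_le_enorm u v; nra.
Qed.

Lemma normr_entry_le_enorm u i : `|u ord0 i| <= enorm u.
Proof.
rewrite -sqrtr_sqr /enorm ler_sqrt ?dotxx_ge0 // /dot (bigD1 i) //= -expr2.
by rewrite lerDl sumr_ge0 // => j _; rewrite -expr2 sqr_ge0.
Qed.

Lemma enorm_le_sum u : enorm u <= \sum_i `|u ord0 i|.
Proof.
rewrite enorm_leP ?sumr_ge0 // expr2 mulr_suml /dot; apply: ler_sum => i _.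
rewrite -[u _ _ * _]real_normK ?num_real // expr2; apply: ler_wpM2l => //.
by rewrite (bigD1 i) //= lerDl sumr_ge0.
Qed.

End Euclidean.

Section Isometry.
Variable R : realType.

Lemma dot_mulmx m n (u : 'rV[R]_m) (L : 'M[R]_(m, n)) (w : 'rV[R]_n) :
  dot (u *m L) w = dot u (w *m L^T).
Proof.
rewrite /dot; under eq_bigr do rewrite mxE big_distrl /=.
rewrite exchange_big /=; apply: eq_bigr => i _.
by rewrite mxE big_distrr /=; apply: eq_bigr => j _; rewrite mxE; ring.
Qed.

Variables (m n : nat) (L : 'M[R]_(m, n)).
Hypothesis isoL : mx_isometry L.

Lemma isometry_dot (u v : 'rV[R]_m) : dot (u *m L) (v *m L) = dot u v.
Proof.
have dotLL w : dot (w *m L) (w *m L) = dot w w by rewrite -!enorm_sqr isoL.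
have := dotLL (u + v).
by rewrite mulmxDl !(dotDl, dotDr) !dotLL (dotC (v *m L)) (dotC v); lra.
Qed.

Lemma isometry_enormB (u v : 'rV[R]_m) :
  enorm (u *m L - v *m L) = enorm (u - v).
Proof. by rewrite -mulmxBl isoL. Qed.

Lemma isometry_mulmxK (u : 'rV[R]_m) : u *m L *m L^T = u.
Proof.
apply/eqP; rewrite -subr_eq0; apply/eqP/dotxx_eq0; set w := _ - u.
have E : dot (u *m L *m L^T) w = dot u w.
  by rewrite dot_mulmx trmxK isometry_dot.
by rewrite {1}/w dotBl E subrr.
Qed.

Lemma enorm_mulmx_tr_le (w : 'rV[R]_n) : enorm (w *m L^T) <= enorm w.
Proof.
set p := w *m L^T.
have : enorm p ^+ 2 <= enorm p * enorm w.
  rewrite enorm_sqr {2}/p -(trmxK L) -dot_mulmx trmxK.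
  by apply: le_trans (dot_le_enorm _ _) _; rewrite isoL.
have [->|p0] := eqVneq (enorm p) 0; first by rewrite enorm_ge0.
by rewrite expr2 ler_pM2l // lt_def p0 enorm_ge0.
Qed.

(* [w L^T L] is the orthogonal projection of [w] on the range of [L]. *)
Lemma isometry_projK (w : 'rV[R]_n) : enorm w <= enorm (w *m L^T) ->
  w *m L^T *m L = w.
Proof.
move=> le_w; apply/eqP; rewrite -subr_eq0; apply/eqP/enorm_eq0.
have := enorm_mulmx_tr_le w.
set c := enorm w; set p := enorm (w *m L^T) => le_p.
have : enorm (w *m L^T *m L - w) ^+ 2 = c ^+ 2 - p ^+ 2.
  by rewrite enorm_sqrB isoL dot_mulmx -enorm_sqr -/p -/c; ring.
have -> : p = c by apply/le_anti; rewrite le_p le_w.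
by rewrite subrr => /eqP; rewrite sqrf_eq0 => /eqP.
Qed.

Lemma isometry_entry_le1 i j : `|L i j| <= 1.
Proof.
have -> : L i j = row i L ord0 j by rewrite mxE.
apply: le_trans (normr_entry_le_enorm _ _) _; rewrite rowE isoL enorm_leP //.
rewrite expr1n /dot (bigD1 i) //= big1 => [|k ki].
  by rewrite !mxE !eqxx mulr1 addr0.
by rewrite !mxE (negbTE ki) andbF mulr0.
Qed.

End Isometry.

Section MaxNorm.
Variable R : realType.

Lemma normr_entry_le_mx m n (M : 'M[R]_(m, n)) i j : `|M i j| <= `|M|.
Proof.
rewrite [X in _ <= X]/Num.norm /= mx_normrE.
by apply/bigmax_geP; right; exists (i, j).
Qed.

Lemma mx_norm_le m n (M : 'M[R]_(m, n)) c :
  0 <= c -> (forall i j, `|M i j| <= c) -> `|M| <= c.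
Proof.
move=> c0 Mc; rewrite [X in X <= _]/Num.norm /= mx_normrE.
by apply/bigmax_leP; split => // -[i j] _; apply: Mc.
Qed.

Lemma enorm_le_mx_norm n (u : 'rV[R]_n) : enorm u <= n%:R * `|u|.
Proof.
apply: le_trans (enorm_le_sum u) _.
rewrite mulr_natl -[X in _ *+ X](card_ord n) -sumr_const; apply: ler_sum => i _.
exact: normr_entry_le_mx.
Qed.

Lemma mx_norm_le_enorm n (u : 'rV[R]_n) : `|u| <= enorm u.
Proof.
apply: mx_norm_le; first exact: enorm_ge0.
by move=> i j; rewrite [i]ord1; apply: normr_entry_le_enorm.
Qed.

Lemma enorm_mulmx_le m n (u : 'rV[R]_m) (M : 'M[R]_(m, n)) :
  enorm (u *m M) <= (n * m)%:R * (enorm u * `|M|).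
Proof.
apply: le_trans (enorm_le_sum _) _.
rewrite natrM -mulrA mulr_natl -[X in _ *+ X](card_ord n) -sumr_const.
apply: ler_sum => j _; rewrite mxE; apply: le_trans (ler_norm_sum _ _ _) _.
rewrite mulr_natl -[X in _ *+ X](card_ord m) -sumr_const; apply: ler_sum => i _.
by rewrite normrM ler_pM ?normr_entry_le_enorm ?normr_entry_le_mx.
Qed.

Lemma mx_norm_trmx m n (M : 'M[R]_(m, n)) : `|M^T| <= `|M|.
Proof. by apply: mx_norm_le => // i j; rewrite mxE normr_entry_le_mx. Qed.

End MaxNorm.

Section EuclideanConvergence.
Variable R : realType.

Lemma cvg_enormP n (u : nat -> 'rV[R]_n) (x : 'rV[R]_n) :
  u @ \oo --> x <->
  forall e, 0 < e -> \forall k \near \oo, enorm (u k - x) < e.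
Proof.
split => [/cvgrPdist_lt ux e e0 | ux]; last first.
  apply/cvgrPdist_lt => e /ux; apply: filterS => k.
  by rewrite -normrN opprB; apply: le_lt_trans (mx_norm_le_enorm _).
have n1 : 0 < n%:R + 1 :> R by rewrite ltr_wpDl.
apply: filterS (ux _ (divr_gt0 e0 n1)) => k /=.
rewrite -normrN opprB ltr_pdivlMr // => uxk.
apply: le_lt_trans (enorm_le_mx_norm _) _.
by have := normr_ge0 (u k - x); nra.
Qed.

Lemma cvg_contraction m n (f : 'rV[R]_m -> 'rV[R]_n) (u : nat -> 'rV[R]_m)
  (x : 'rV[R]_m) :
  (forall y z, enorm (f y - f z) <= enorm (y - z)) ->
  u @ \oo --> x -> (fun k => f (u k)) @ \oo --> f x.
Proof.
move=> f1 /cvg_enormP ux; apply/cvg_enormP => e /ux.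
by apply: filterS => k; apply: le_lt_trans.
Qed.

Lemma cvg_enorm n (u : nat -> 'rV[R]_n) x :
  u @ \oo --> x -> (fun k => enorm (u k)) @ \oo --> enorm x.
Proof.
move=> /cvg_enormP ux; apply/cvgrPdist_lt => e /ux; apply: filterS => k.
apply: le_lt_trans; rewrite ler_norml.
have := enormD (u k - x) x; have := enormD (x - u k) (u k).
by rewrite !subrK enorm_distC; lra.
Qed.

Lemma cvg_trmx m n (M : nat -> 'M[R]_(m, n)) (L : 'M[R]_(m, n)) :
  M @ \oo --> L -> (fun k => (M k)^T) @ \oo --> L^T.
Proof.
move=> /cvgrPdist_lt ML; apply/cvgrPdist_lt => e /ML; apply: filterS => k.
by apply: le_lt_trans; rewrite -linearB mx_norm_trmx.
Qed.

Lemma cvg_mulmx m n (u : nat -> 'rV[R]_m) (M : nat -> 'M[R]_(m, n))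
  (x : 'rV[R]_m) (L : 'M[R]_(m, n)) :
  (forall k v, enorm (v *m M k) <= enorm v) ->
  u @ \oo --> x -> M @ \oo --> L -> (fun k => u k *m M k) @ \oo --> x *m L.
Proof.
move=> contrM /cvg_enormP ux /cvgrPdist_lt ML; apply/cvg_enormP => e e0.
set C := (n * m)%:R * enorm x.
have C0 : 0 <= C by rewrite mulr_ge0 ?enorm_ge0.
have e2 : 0 < e / 2 by rewrite divr_gt0.
have e2C : 0 < e / 2 / (C + 1) by rewrite divr_gt0 // ltr_wpDl.
near=> k.
have -> : u k *m M k - x *m L = (u k - x) *m M k + x *m (M k - L).
  by rewrite mulmxBl mulmxBr addrA subrK.
apply: le_lt_trans (enormD _ _) _.
have uk : enorm ((u k - x) *m M k) < e / 2.
  by apply: le_lt_trans (contrM _ _) _; near: k; apply: ux.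
have Mk : `|M k - L| * (C + 1) < e / 2.
  by rewrite -ltr_pdivlMr ?ltr_wpDl // distrC; near: k; apply: ML.
have := enorm_mulmx_le x (M k - L); rewrite mulrA -/C.
by have := normr_ge0 (M k - L); nra.
Unshelve. all: by end_near.
Qed.

End EuclideanConvergence.

Lemma near_subseq (P : nat -> Prop) (s : nat -> nat) :
  (forall j, (j <= s j)%N) ->
  (\forall k \near \oo, P k) -> \forall j \near \oo, P (s j).
Proof.
by move=> js [N _ NP]; exists N => // j /= Nj; apply/NP/(leq_trans Nj).
Qed.

Lemma cvg_subseq (T : topologicalType) (u : nat -> T) (l : T) (s : nat -> nat) :
  (forall j, (j <= s j)%N) -> u @ \oo --> l -> u \o s @ \oo --> l.
Proof. by move=> js; apply: cvg_comp => P /(near_subseq js). Qed.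

Lemma compact_cvg_subseq (R : realType) (V : normedModType R) (K : set V)
  (u : nat -> V) : compact K -> (forall k, K (u k)) ->
  exists2 l, K l & exists2 s : nat -> nat,
    (forall j, (j <= s j)%N) & u \o s @ \oo --> l.
Proof.
move=> cK Ku.
have uK : (u @ \oo) K by exists 0%N => // k _; apply: Ku.
have [l [Kl ul]] := cK _ _ uK.
have tail_close j : exists k, (j <= k)%N /\ `|l - u k| < j.+1%:R^-1.
  have j0 : 0 < j.+1%:R^-1 :> R by rewrite invr_gt0.
  have [_ [[k jk <-]]] := ul [set u k | k in [set k | (j <= k)%N]]
    (ball l j.+1%:R^-1)
    (ex_intro2 _ _ j I (fun k jk => ex_intro2 _ _ k jk erefl))
    (nbhsx_ballx _ _ j0).
  by rewrite -ball_normE /=; exists k.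
have [s sP] := choice tail_close.
exists l => //; exists s => [j|]; first by case: (sP j).
apply/cvgrPdist_lt => e e0; near=> j; apply: lt_trans (sP j).2 _.
by near: j; apply: (near_infty_natSinv_lt (PosNum e0)).
Unshelve. all: by end_near.
Qed.

Lemma isometry_range_compact (R : realType) m n (A : Type)
  (Lam : A -> 'M[R]_(m, n)) :
  (forall a, mx_isometry (Lam a)) -> closed (range Lam) -> compact (range Lam).
Proof.
move=> isoLam clLam.
have vec_mx_cont : continuous (@vec_mx R m n).
  move=> v; apply/(@cvgrPdist_lt _ _ _ (@nbhs _ 'rV[R]_(m * n) v)) => e e0.
  apply/(@nbhs_normP _ 'rV[R]_(m * n)); exists e => //= w.
  apply: le_lt_trans; rewrite -linearB.
  by apply: mx_norm_le => // i j; rewrite mxE normr_entry_le_mx.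
(* [bounded_closed_compact] is only available for row vectors. *)
set S := (@vec_mx R m n) @^-1` range Lam.
have cS : compact S.
  apply: bounded_closed_compact; last exact: preimage_closed.
  exists 1; split => // M M1 v [a _ Lav].
  apply: le_trans (ltW M1); apply: mx_norm_le => // i k.
  rewrite [i]ord1 -(vec_mxK v) -Lav; case/mxvec_indexP: k => i' j'.
  by rewrite mxvecE isometry_entry_le1.
have -> : range Lam = (@vec_mx R m n) @` S.
  apply/seteqP; split => [M LM|_ [v Sv <-] //].
  by exists (mxvec M); rewrite /S /= mxvecK.
by apply: continuous_compact => //; apply: continuous_subspaceT.
Qed.

Lemma quadratic_le_bound (R : realType) (r t b : R) :
  0 <= r -> 0 < t -> 0 <= b ->
  r ^+ 2 <= t ^+ 2 + 2 * b * t * (r + t) -> r <= (1 + 3 * b) * t.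
Proof.
move=> r0 t0 b0 rt; rewrite leNgt; apply/negP => tr.
have r2bt : 0 < r - 2 * b * t by nra.
have : (1 + 3 * b) * t * (r - 2 * b * t) <= r * (r - 2 * b * t).
  by rewrite ler_wpM2r // ltW.
have : (1 + 3 * b) * t * ((1 + b) * t) <= (1 + 3 * b) * t * (r - 2 * b * t).
  by rewrite ler_wpM2l //; nra.
nra.
Qed.

Lemma frechet_subdiff_ball (R : realType) n (f : 'rV[R]_n -> \bar R) x y :
  frechet_subdiff f x y -> forall e, 0 < e -> exists2 d, 0 < d &
    forall z, enorm (z - x) < d ->
      ((dot (z - x) y - e * enorm (z - x))%:E <= f z - f x)%E.
Proof.
move=> [[r fx] fr] e /fr [d d0 fd]; exists d => // z zd.
have [zx|zx0] := eqVneq (enorm (z - x)) 0; last first.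
  by apply: fd; rewrite zd andbT lt_def zx0 enorm_ge0.
by rewrite (subr0_eq (enorm_eq0 zx)) subrr dot0l enorm0 mulr0 subrr fx subee.
Qed.

Section SpectralDecompositionSystem.
Variables (R : realType) (m n : nat) (G A : Type).
Variables (mul : G -> G -> G) (one : G) (inv : G -> G) (act : G -> 'M[R]_m).
Variables (gam : 'rV[R]_n -> 'rV[R]_m) (Lam : A -> 'M[R]_(m, n)).
Hypothesis sds : spectral_decomposition_system mul one inv act gam Lam.

Lemma Lam_isometry a : mx_isometry (Lam a).
Proof. by case: sds. Qed.

Lemma act_isometry s : mx_isometry (act s).
Proof. by case: sds => -[]. Qed.

Lemma gam_adapted X : exists a, adapted gam Lam X a.
Proof. by case: sds => _ _ _ + _; apply. Qed.

Lemma dot_le_dot_gam X Y : dot X Y <= dot (gam X) (gam Y).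
Proof. by case: sds. Qed.

Lemma gam_Lam_orbit a (x : 'rV[R]_m) : exists s, gam (x *m Lam a) = x *m act s.
Proof.
case: sds => _ _ [tau [_ tau_orbit gamLam]] _ _; rewrite gamLam.
by have [s _ <-] := tau_orbit x; exists s.
Qed.

Lemma gam_Lam_act a s (x : 'rV[R]_m) :
  gam (x *m act s *m Lam a) = gam (x *m Lam a).
Proof.
by case: sds => _ _ [tau [tau_inv _ gamLam]] _ _; rewrite !gamLam tau_inv.
Qed.

Lemma gam_Lam_gam a X : gam (gam X *m Lam a) = gam X.
Proof.
case: sds => _ _ [tau [_ _ gamLam]] _ _; have [b {2}->] := gam_adapted X.
by rewrite !gamLam.
Qed.

Lemma mulmx_act_inv s (x : 'rV[R]_m) : x *m act (inv s) *m act s = x.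
Proof.
case: sds => -[_ _ mulVs [act1 actM] _] _ _ _ _.
have inv_act : act s *m act (inv s) = 1%:M by rewrite -actM mulVs act1.
by rewrite -mulmxA (mulmx1C inv_act) mulmx1.
Qed.

Lemma enorm_gam X : enorm (gam X) = enorm X.
Proof. by have [a {2}->] := gam_adapted X; rewrite Lam_isometry. Qed.

Lemma gam_contraction X Z : enorm (gam Z - gam X) <= enorm (Z - X).
Proof.
rewrite enorm_leP ?enorm_ge0 // -enorm_sqr !enorm_sqrB !enorm_gam.
by have := dot_le_dot_gam Z X; lra.
Qed.

Lemma cvg_gam (u : nat -> 'rV[R]_n) X :
  u @ \oo --> X -> (fun k => gam (u k)) @ \oo --> gam X.
Proof. by apply: cvg_contraction => Y Z; apply: gam_contraction. Qed.

(* [x] and [y] are moved simultaneously along the orbit selected by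
   [gam ((x + eps y) Lam a)]; both inequalities come from [C]. *)
Lemma sds_perturbation a (x y : 'rV[R]_m) Z eps : 0 < eps ->
  let t := enorm (Z - x *m Lam a) in
  exists u, [/\ exists s, gam Z = u *m act s,
    enorm (u - x) ^+ 2 <=
      t ^+ 2 + 2 * eps * (dot (u - x) y - dot (Z - x *m Lam a) (y *m Lam a))
  & - t ^+ 2 <=
      2 * eps * (dot (u - x) y - dot (Z - x *m Lam a) (y *m Lam a))].
Proof.
move=> eps0 t; set X := x *m Lam a; set Y := y *m Lam a; set z := gam Z.
have [s gs] := gam_Lam_orbit a (x + eps *: y).
set x' := x *m act s; set y' := y *m act s.
exists (z *m act (inv s)); set u := z *m act (inv s).
have zu : u *m act s = z by rewrite mulmx_act_inv.
have -> : enorm (u - x) = enorm (z - x').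
  by rewrite -(act_isometry s) mulmxBl zu.
have -> : dot (u - x) y = dot (z - x') y'.
  by rewrite -(isometry_dot (act_isometry s)) mulmxBl zu.
have dotZ : dot Z X + eps * dot Z Y <= dot z x' + eps * dot z y'.
  have := dot_le_dot_gam Z ((x + eps *: y) *m Lam a).
  by rewrite gs !mulmxDl !dotDr -!scalemxAl !dotZr.
have dotz : dot z x' <= dot z (gam X).
  have := dot_le_dot_gam (z *m Lam a) (x' *m Lam a).
  by rewrite (isometry_dot (Lam_isometry a)) /z gam_Lam_gam /x' gam_Lam_act.
have dotzX : 2 * dot z (gam X) <= enorm Z ^+ 2 + enorm X ^+ 2.
  have := sqr_ge0 (enorm (z - gam X)); rewrite enorm_sqrB !enorm_gam; lra.
have nx' : enorm x' = enorm X by rewrite (act_isometry s) Lam_isometry.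
have dx'y' : dot x' y' = dot X Y.
  by rewrite (isometry_dot (act_isometry s)) (isometry_dot (Lam_isometry a)).
have := enorm_sqrB Z X; have := enorm_sqrB z x'; rewrite enorm_gam nx' -/t.
rewrite !dotBl dx'y'; split; [by exists s | nra | nra].
Qed.

Variable phi : 'rV[R]_m -> \bar R.
Hypothesis phi_inv : S_invariant act phi.

Lemma phi_gam_Lam a (x : 'rV[R]_m) : phi (gam (x *m Lam a)) = phi x.
Proof. by have [s ->] := gam_Lam_orbit a x; rewrite phi_inv. Qed.

Lemma frechet_lift a (x y : 'rV[R]_m) : frechet_subdiff phi x y ->
  frechet_subdiff (phi \o gam) (x *m Lam a) (y *m Lam a).
Proof.
move=> fxy; have [[r phix] _] := fxy.
split; first by exists r; rewrite /= phi_gam_Lam.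
move=> e e0; set c := enorm y; set K := 1 + 3 * (c / e).
have ce0 : 0 <= c / e by rewrite divr_ge0 ?enorm_ge0 ?ltW.
have K0 : 0 < K by rewrite /K; lra.
have e'0 : 0 < e / (2 * K) by rewrite divr_gt0 // mulr_gt0.
have [d d0 fd] := frechet_subdiff_ball fxy e'0.
exists (d / K); first by rewrite divr_gt0.
move=> Z /andP[t0 tdK]; set t := enorm (Z - x *m Lam a) in t0 tdK *.
have [u [[s gZ] ux Dt]] := sds_perturbation a x y Z (divr_gt0 t0 e0).
rewrite -/t in ux Dt; set D := dot (u - x) y - _ in ux Dt.
set r' := enorm (u - x) in ux.
have Dle : D <= c * r' + c * t.
  have := normr_dot_le (u - x) y.
  have := normr_dot_le (Z - x *m Lam a) (y *m Lam a).
  rewrite Lam_isometry -/t -/r' -/c /D.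
  by move=> /ler_normlP[+ _] /ler_normlP[_ +]; lra.
have r'K : r' <= K * t.
  apply: quadratic_le_bound => //; first exact: enorm_ge0.
  apply: le_trans ux _; rewrite lerD2l.
  have : t / e * D <= t / e * (c * r' + c * t).
    by apply: ler_wpM2l; rewrite // divr_ge0 ?ltW.
  lra.
have Dge : - (t * e / 2) <= D.
  have te0 : 0 < 2 * (t / e) by rewrite mulr_gt0 ?divr_gt0.
  rewrite -(ler_pM2l te0); have -> : 2 * (t / e) * - (t * e / 2) = - t ^+ 2.
    by field; rewrite gt_eqF.
  exact: Dt.
have r'd : r' < d.
  by apply: le_lt_trans r'K _; move: tdK; rewrite ltr_pdivlMr // mulrC.
rewrite /= gZ phi_inv phi_gam_Lam; apply: le_trans (fd u r'd); rewrite lee_fin.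
have : e / (2 * K) * r' <= t * e / 2.
  apply: le_trans (ler_wpM2l (ltW e'0) r'K) _.
  by have -> : e / (2 * K) * (K * t) = t * e / 2 by field; rewrite gt_eqF.
by move: Dge; rewrite /D -/r'; lra.
Qed.

Lemma frechet_restrict a (x y : 'rV[R]_m) :
  frechet_subdiff (phi \o gam) (x *m Lam a) (y *m Lam a) ->
  frechet_subdiff phi x y.
Proof.
move=> [[r phix] fr]; split; first by exists r; rewrite -phix /= phi_gam_Lam.
move=> e /fr [d d0 fd]; exists d => // v vx.
have := fd (v *m Lam a).
rewrite /= !phi_gam_Lam (isometry_enormB (Lam_isometry a)).
by rewrite -mulmxBl (isometry_dot (Lam_isometry a)); apply.
Qed.

(* The Frechet inequality is tested at [gam X *m Lam b], which lies within
   [2 t |Y|] of [X] and where [phi \o gam] takes the value [phi (gam X)]. *)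
Lemma frechet_dir_bound X Y e : frechet_subdiff (phi \o gam) X Y -> 0 < e ->
  exists2 d, 0 < d & forall t b, 0 < t < d -> adapted gam Lam (X + t *: Y) b ->
    enorm Y <= enorm (Y *m (Lam b)^T) + e.
Proof.
move=> fXY e0; have [[r /= phiX] _] := fXY; set c := enorm Y.
have e2 : 0 < e / 2 by rewrite divr_gt0.
have [d d0 fd] := frechet_subdiff_ball fXY e2.
have c1 : 0 < 2 * c + 1 by rewrite ltr_wpDl ?mulr_ge0 ?enorm_ge0.
exists (d / (2 * c + 1)); first by rewrite divr_gt0.
move=> t b /andP[t0 td] adZ; set Z := X + t *: Y in adZ.
set W := gam X *m Lam b.
have ZX : enorm (Z - X) = t * c by rewrite addrC addKr enormZ gtr0_norm.
have ZW : enorm (Z - W) <= t * c.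
  by rewrite -ZX {1}adZ (isometry_enormB (Lam_isometry b)) gam_contraction.
have WX : enorm (W - X) <= 2 * (t * c).
  have := enormD (W - Z) (Z - X); rewrite addrA subrK (enorm_distC W Z) ZX; lra.
have WXd : enorm (W - X) < d.
  by apply: le_lt_trans WX _; move: td; rewrite ltr_pdivlMr //; lra.
have dotWX : dot (W - X) Y <= e * (t * c).
  have := fd W WXd; rewrite /= gam_Lam_gam phiX subee // lee_fin => fW.
  have := ler_wpM2l (ltW e2) WX; lra.
have dotZW : dot (Z - W) Y <= t * c * enorm (Y *m (Lam b)^T).
  rewrite {1}adZ -mulmxBl dot_mulmx; apply: le_trans (dot_le_enorm _ _) _.
  by rewrite ler_wpM2r ?enorm_ge0 // -ZX gam_contraction.
have : t * c ^+ 2 <= t * (c * (enorm (Y *m (Lam b)^T) + e)).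
  have <- : dot (Z - W) Y + dot (W - X) Y = t * c ^+ 2.
    by rewrite -dotDl addrA subrK addrC addKr dotZl -enorm_sqr.
  lra.
rewrite ler_pM2l //; have [->|c0] := eqVneq c 0.
  by move=> _; rewrite addr_ge0 ?enorm_ge0 ?ltW.
by rewrite expr2 ler_pM2l // lt_def c0 enorm_ge0.
Qed.

Lemma adapted_cvg (u : nat -> 'rV[R]_n) (b : nat -> A) U a :
  u @ \oo --> U -> (fun k => Lam (b k)) @ \oo --> Lam a ->
  (forall k, adapted gam Lam (u k) (b k)) -> adapted gam Lam U a.
Proof.
move=> uU bLa adu.
have : (fun k => gam (u k) *m Lam (b k)) @ \oo --> gam U *m Lam a.
  by apply: cvg_mulmx (cvg_gam uU) bLa => k v; rewrite Lam_isometry.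
by rewrite -(funext adu); apply: cvg_unique.
Qed.

Hypothesis clLam : closed (range Lam).

Lemma Lam_cvg_subseq (b : nat -> A) : exists a, exists2 s : nat -> nat,
  (forall j, (j <= s j)%N) & (fun j => Lam (b (s j))) @ \oo --> Lam a.
Proof.
have bLam k : range Lam (Lam (b k)) by exists (b k).
have [_ [a _ <-] sLa] := compact_cvg_subseq (u := fun k => Lam (b k))
  (isometry_range_compact Lam_isometry clLam) bLam.
by exists a.
Qed.

Lemma frechet_decomp X Y : frechet_subdiff (phi \o gam) X Y ->
  exists a y, [/\ frechet_subdiff phi (gam X) y, adapted gam Lam X a
                & Y = y *m Lam a].
Proof.
move=> fXY; pose Z k := X + k.+1%:R^-1 *: Y.
have [b adZ] := choice (fun k => gam_adapted (Z k)).
have [a [s js bs]] := Lam_cvg_subseq b.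
set L := Lam a in bs *.
have ZX : Z @ \oo --> X.
  have := cvgD (cvg_cst X) (cvgZ (@cvg_harmonic R) (cvg_cst Y)).
  by rewrite scale0r addr0; apply.
have XL : adapted gam Lam X a.
  exact: adapted_cvg (cvg_subseq js ZX) bs (fun j => adZ (s j)).
have YL : Y *m L^T *m L = Y.
  apply: (isometry_projK (Lam_isometry a)); apply/ler_addgt0Pr => e e0.
  have [d d0 Ybd] := frechet_dir_bound fXY e0.
  have YLb : (fun j => enorm (Y *m (Lam (b (s j)))^T)) @ \oo -->
      enorm (Y *m L^T).
    apply/cvg_enorm/cvg_mulmx; [|exact: cvg_cst|exact: cvg_trmx].
    by move=> j v; apply/enorm_mulmx_tr_le/Lam_isometry.
  rewrite -lerBlDr; apply: ler_cvg_to (cvg_cst _) YLb _.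
  pose P k := enorm Y - e <= enorm (Y *m (Lam (b k))^T).
  apply: (near_subseq (P := P) js).
  near=> k; rewrite /P lerBlDr; apply: Ybd (adZ k); rewrite invr_gt0 ltr0n /=.
  by near: k; apply: (near_infty_natSinv_lt (PosNum d0)).
exists a, (Y *m L^T); rewrite -/L; split => //.
by apply: (@frechet_restrict a); rewrite -/L -XL YL.
Unshelve. all: by end_near.
Qed.

Lemma limiting_lift a (x y : 'rV[R]_m) : limiting_subdiff phi x y ->
  limiting_subdiff (phi \o gam) (x *m Lam a) (y *m Lam a).
Proof.
move=> [[r phix] [xs [ys [xsx phixs ysy fr]]]].
have cvgLam : forall (u : nat -> 'rV[R]_m) (v : 'rV[R]_m), u @ \oo --> v ->
    (fun k => u k *m Lam a) @ \oo --> v *m Lam a.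
  move=> u v; apply: (cvg_contraction (f := fun w => w *m Lam a)) => w z.
  by rewrite (isometry_enormB (Lam_isometry a)).
split; first by exists r; rewrite /= phi_gam_Lam.
exists (fun k => xs k *m Lam a), (fun k => ys k *m Lam a); split.
- exact: cvgLam.
- by rewrite /comp phi_gam_Lam; under eq_fun do rewrite phi_gam_Lam.
- exact: cvgLam.
- by move=> k; apply: frechet_lift.
Qed.

Lemma limiting_decomp X Y : limiting_subdiff (phi \o gam) X Y ->
  exists a y, [/\ limiting_subdiff phi (gam X) y, adapted gam Lam X a
                & Y = y *m Lam a].
Proof.
move=> [[r phiX] [xs [ys [xsX phixs ysY fr]]]].
have [b /choice[yk fyk]] := choice (fun k => frechet_decomp (fr k)).
have [a [s js bs]] := Lam_cvg_subseq b.
set L := Lam a in bs *.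
have xsX' := cvg_subseq js xsX; have ysY' := cvg_subseq js ysY.
have XL : adapted gam Lam X a.
  by apply: adapted_cvg xsX' bs _ => j; case: (fyk (s j)).
have ykY : (fun j => yk (s j)) @ \oo --> Y *m L^T.
  have -> : (fun j => yk (s j)) = fun j => ys (s j) *m (Lam (b (s j)))^T.
    apply/funext => j; case: (fyk (s j)) => _ _ ->.
    by rewrite (isometry_mulmxK (Lam_isometry _)).
  apply: cvg_mulmx ysY' (cvg_trmx bs) => j v.
  exact/enorm_mulmx_tr_le/Lam_isometry.
have YL : Y = Y *m L^T *m L.
  have : (fun j => yk (s j) *m Lam (b (s j))) @ \oo --> Y *m L^T *m L.
    by apply: cvg_mulmx ykY bs => j v; rewrite Lam_isometry.
  have -> : (fun j => yk (s j) *m Lam (b (s j))) = ys \o s.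
    by apply/funext => j; case: (fyk (s j)).
  exact: cvg_unique ysY'.
exists a, (Y *m L^T); rewrite -/L; split => //.
split; first by exists r.
exists (fun j => gam (xs (s j))), (fun j => yk (s j)); split => //.
- exact: cvg_gam.
- exact: cvg_subseq js phixs.
- by move=> j; case: (fyk (s j)).
Qed.

End SpectralDecompositionSystem.

Theorem theorem4p1 (R : realType) (m n : nat) (G A : Type)
  (mul : G -> G -> G) (one : G) (inv : G -> G) (act : G -> 'M[R]_m)
  (gam : 'rV[R]_n -> 'rV[R]_m) (Lam : A -> 'M[R]_(m, n))
  (HS : spectral_decomposition_system mul one inv act gam Lam)
  (Hcl : closed (range Lam))
  (phi : 'rV[R]_m -> \bar R) (Hphi : S_invariant act phi)
  (X : 'rV[R]_n) :
  frechet_subdiff (phi \o gam) X =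
    [set Y | exists a y, [/\ frechet_subdiff phi (gam X) y,
                             adapted gam Lam X a & Y = y *m Lam a]]
  /\
  limiting_subdiff (phi \o gam) X =
    [set Y | exists a y, [/\ limiting_subdiff phi (gam X) y,
                             adapted gam Lam X a & Y = y *m Lam a]].
Proof.
split; apply/seteqP; split => Y.
- exact: (frechet_decomp HS Hphi Hcl).
- by move=> [a [y [fy adX ->]]]; rewrite {1}adX; exact: (frechet_lift HS Hphi).
- exact: (limiting_decomp HS Hphi Hcl).
- by move=> [a [y [ly adX ->]]]; rewrite {1}adX; exact: (limiting_lift HS Hphi).
Qed.
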